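(* Let $\mathcal{C}$ be a triangulated category and let $d=\infty$ or $d$ an odd positive integer. Suppose that to every object $X$ of $\mathcal{C}$ is assigned an element $\rho(X)\in\mathbb{R}(d)$ such that: (a) $\rho(\Sigma X)=q\rho(X)$ for all $X$; (b) $\rho(X\oplus Y)=\rho(X)+\rho(Y)$ for all $X,Y$; (c) for every exact triangle $X\to Y\to Z\rightsquigarrow$ there is $\phi\in\mathbb{R}_{\geq0}(d)$ with $\rho(X)-\rho(Y)+\rho(Z)=(q+1)\phi$. Then for every morphism $f:X\to Y$ the formula $$\rho(f):=\frac{\rho(Y)-\rho(\operatorname{cone}(f))+q\rho(X)}{q+1}$$ (a well-defined quotient in $\mathbb{R}(d)$) determines a $d$-periodic rank function on $\mathcal{C}$. If in addition all $\rho(X)$ lie in $\mathbb{Z}(d)$ and the elements $\phi$ in (c) lie in $\mathbb{Z}(d)$, then the resulting rank function is integral.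
   Context: $\mathbb{R}(d)=\mathbb{R}[q,q^{-1}]$ if $d=\infty$ and $\mathbb{R}[q]/(q^d-1)$ if $d<\infty$; $\mathbb{Z}(d)$ is defined likewise with integer coefficients; $\mathbb{R}_{\geq0}(d)$ is the set of elements represented by (Laurent) polynomials with nonnegative coefficients; $\phi\geq\psi$ means $\phi-\psi\in\mathbb{R}_{\geq0}(d)$. A $d$-periodic rank function on $\mathcal{C}$ (translation $\Sigma$) assigns to each morphism $f$ an element $\rho(f)\in\mathbb{R}_{\geq0}(d)$ such that: $\rho(\Sigma f)=q\rho(f)$; $\rho(f\oplus g)=\rho(f)+\rho(g)$; $\rho(f)+\rho(g)=\rho(\mathrm{id}_Y)$ for each exact triangle $X\xrightarrow{f}Y\xrightarrow{g}Z\rightsquigarrow$; $\rho\begin{pmatrix} f&h\\0&g\end{pmatrix}\geq\rho(f)+\rho(g)$ for $f:X\to Y$, $g:Z\to W$, $h:Z\to Y$; and $\rho(gf)\leq\rho(f)$, $\rho(gf)\leq\rho(g)$ whenever $gf$ is defined. It is integral if all values lie in $\mathbb{Z}_{\geq0}(d)$. *)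

From HB Require Import structures.
From mathcomp Require Import all_boot all_order all_algebra.
From mathcomp Require Import reals.
Set Implicit Arguments. Unset Strict Implicit. Unset Printing Implicit Defensive.
Import Order.TTheory GRing.Theory Num.Theory.
Local Open Scope ring_scope.

(* Triangulated categories (Stacks Project conventions, Tag 0145).     *)

(* Data: a preadditive category with chosen zero object, chosen binary
   biproducts, a translation functor Sigma and a class of exact triangles. *)
Record TriData := {
  Ob : Type;
  Mor : Ob -> Ob -> zmodType;
  comp : forall X Y Z : Ob, Mor Y Z -> Mor X Y -> Mor X Z;
  idm : forall X : Ob, Mor X X;
  zob : Ob;
  bip : Ob -> Ob -> Ob;
  binl : forall X Y : Ob, Mor X (bip X Y);
  binr : forall X Y : Ob, Mor Y (bip X Y);
  bpl : forall X Y : Ob, Mor (bip X Y) X;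
  bpr : forall X Y : Ob, Mor (bip X Y) Y;
  Sob : Ob -> Ob;
  Shom : forall X Y : Ob, Mor X Y -> Mor (Sob X) (Sob Y);
  tri : forall X Y Z : Ob, Mor X Y -> Mor Y Z -> Mor Z (Sob X) -> Prop
}.

Arguments comp {_ _ _ _}.
Arguments idm {_}.
Arguments zob {_}.
Arguments bip {_}.
Arguments binl {_ _ _}.
Arguments binr {_ _ _}.
Arguments bpl {_ _ _}.
Arguments bpr {_ _ _}.
Arguments Sob {_}.
Arguments Shom {_ _ _}.
Arguments tri {_ _ _ _}.

Section TriCat.
Variable C : TriData.
Local Notation Ob := (Ob C).
Local Notation Mor := (@Mor C).

Definition is_iso (X Y : Ob) (u : Mor X Y) : Prop :=
  exists v : Mor Y X, comp v u = idm X /\ comp u v = idm Y.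

Definition tri_iso (X Y Z X' Y' Z' : Ob)
  (f : Mor X Y) (g : Mor Y Z) (h : Mor Z (Sob X))
  (f' : Mor X' Y') (g' : Mor Y' Z') (h' : Mor Z' (Sob X'))
  (a : Mor X X') (b : Mor Y Y') (c : Mor Z Z') : Prop :=
  [/\ is_iso a, is_iso b & is_iso c] /\
  [/\ comp b f = comp f' a, comp c g = comp g' b &
      comp (Shom a) h = comp h' c].

Record is_triangulated : Prop := {
  comp_assoc : forall X Y Z W (f : Mor X Y) (g : Mor Y Z) (h : Mor Z W),
      comp h (comp g f) = comp (comp h g) f;
  comp_idl : forall X Y (f : Mor X Y), comp (idm Y) f = f;
  comp_idr : forall X Y (f : Mor X Y), comp f (idm X) = f;
  comp_addl : forall X Y Z (f : Mor X Y) (g g' : Mor Y Z),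
      comp (g + g') f = comp g f + comp g' f;
  comp_addr : forall X Y Z (f f' : Mor X Y) (g : Mor Y Z),
      comp g (f + f') = comp g f + comp g f';
  zob_zero : idm (@zob C) = 0;
  bip_ll : forall X Y : Ob, comp (@bpl C X Y) binl = idm X;
  bip_rr : forall X Y : Ob, comp (@bpr C X Y) binr = idm Y;
  bip_lr : forall X Y : Ob, comp (@bpl C X Y) binr = 0;
  bip_rl : forall X Y : Ob, comp (@bpr C X Y) binl = 0;
  bip_id : forall X Y : Ob, comp binl bpl + comp binr bpr = idm (bip X Y);
  Shom_id : forall X : Ob, Shom (idm X) = idm (Sob X);
  Shom_comp : forall X Y Z (f : Mor X Y) (g : Mor Y Z),
      Shom (comp g f) = comp (Shom g) (Shom f);
  Shom_add : forall X Y (f g : Mor X Y), Shom (f + g) = Shom f + Shom g;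
  Shom_bij : forall X Y : Ob, bijective (@Shom C X Y);
  Sob_esurj : forall Y : Ob, exists X (u : Mor (Sob X) Y), is_iso u;
  TR1_iso : forall X Y Z X' Y' Z' (f : Mor X Y) (g : Mor Y Z) (h : Mor Z (Sob X))
      (f' : Mor X' Y') (g' : Mor Y' Z') (h' : Mor Z' (Sob X')) a b c,
      tri_iso f g h f' g' h' a b c -> tri f g h -> tri f' g' h';
  TR1_id : forall X : Ob, tri (idm X) (0 : Mor X (@zob C)) (0 : Mor (@zob C) (Sob X));
  TR1_ext : forall X Y (f : Mor X Y), exists Z (g : Mor Y Z) (h : Mor Z (Sob X)),
      tri f g h;
  TR2 : forall X Y Z (f : Mor X Y) (g : Mor Y Z) (h : Mor Z (Sob X)),
      tri f g h <-> tri g h (- Shom f);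
  TR3 : forall X Y Z X' Y' Z' (f : Mor X Y) (g : Mor Y Z) (h : Mor Z (Sob X))
      (f' : Mor X' Y') (g' : Mor Y' Z') (h' : Mor Z' (Sob X'))
      (u : Mor X X') (v : Mor Y Y'),
      tri f g h -> tri f' g' h' -> comp v f = comp f' u ->
      exists w : Mor Z Z', comp w g = comp g' v /\ comp (Shom u) h = comp h' w;
  TR4 : forall X Y Z Z' X' Y' (f : Mor X Y) (g : Mor Y Z)
      (f' : Mor Y Z') (f'' : Mor Z' (Sob X))
      (h' : Mor Z Y') (h'' : Mor Y' (Sob X))
      (g' : Mor Z X') (g'' : Mor X' (Sob Y)),
      tri f f' f'' -> tri (comp g f) h' h'' -> tri g g' g'' ->
      exists (a : Mor Z' Y') (b : Mor Y' X'),
        [/\ tri a b (comp (Shom f') g''),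
            comp a f' = comp h' g,
            comp h'' a = f'',
            comp b h' = g' &
            comp g'' b = comp (Shom f) h'']
}.

Definition dsum (X Y X' Y' : Ob) (f : Mor X Y) (g : Mor X' Y') :
    Mor (bip X X') (bip Y Y') :=
  comp binl (comp f bpl) + comp binr (comp g bpr).

(* the block matrix [[f, h], [0, g]] : X (+) Z -> Y (+) W *)
Definition upper_mx (X Y Z W : Ob) (f : Mor X Y) (h : Mor Z Y) (g : Mor Z W) :
    Mor (bip X Z) (bip Y W) :=
  comp binl (comp f bpl) + comp binl (comp h bpr) + comp binr (comp g bpr).

End TriCat.

(* The rings R(d).  An element of R(d) is represented by its           *)
(* coefficient function n |-> (coefficient of q^n) : int -> R, which   *)
(* must be finitely supported (d = oo) or d-periodic (d < oo; then the *)
(* coefficient of q^k, 0 <= k < d, in R[q]/(q^d-1) is a k).            *)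

Inductive period := PInf | PFin of nat.

Section Rd.
Variable R : realType.

Definition inRd (d : period) (a : int -> R) : Prop :=
  match d with
  | PInf => exists N : nat, forall n : int, (N < absz n)%N -> a n = 0
  | PFin m => forall n : int, a (n + (m : int)) = a n
  end.

Definition fadd (a b : int -> R) : int -> R := fun n => a n + b n.
Definition fsub (a b : int -> R) : int -> R := fun n => a n - b n.
Definition qmul (a : int -> R) : int -> R := fun n => a (n - 1).
Definition qp1mul (a : int -> R) : int -> R := fadd (qmul a) a.
Definition fnneg (a : int -> R) : Prop := forall n, 0 <= a n.
Definition fintegral (a : int -> R) : Prop := forall n, a n \is a Num.int.
Definition fle (a b : int -> R) : Prop := fnneg (fsub b a).

Definition rank_fun (d : period) (C : TriData)
    (rk : forall X Y : Ob C, Mor X Y -> int -> R) : Prop :=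
  (forall X Y (f : Mor X Y), inRd d (rk X Y f) /\ fnneg (rk X Y f)) /\
  [/\ (forall X Y (f : Mor X Y), rk _ _ (Shom f) = qmul (rk X Y f)),
      (forall X Y X' Y' (f : Mor X Y) (g : Mor X' Y'),
          rk _ _ (dsum f g) = fadd (rk _ _ f) (rk _ _ g)),
      (forall X Y Z (f : Mor X Y) (g : Mor Y Z) (h : Mor Z (Sob X)),
          tri f g h -> fadd (rk _ _ f) (rk _ _ g) = rk _ _ (idm Y)),
      (forall X Y Z W (f : Mor X Y) (g : Mor Z W) (h : Mor Z Y),
          fle (fadd (rk _ _ f) (rk _ _ g)) (rk _ _ (upper_mx f h g))) &
      (forall X Y Z (f : Mor X Y) (g : Mor Y Z),
          fle (rk _ _ (comp g f)) (rk _ _ f) /\ fle (rk _ _ (comp g f)) (rk _ _ g))].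

Definition integral_rank_fun (C : TriData)
    (rk : forall X Y : Ob C, Mor X Y -> int -> R) : Prop :=
  forall X Y (f : Mor X Y), fintegral (rk X Y f).

End Rd.

From Pilot Require Import Defs.
From HB Require Import structures.
From mathcomp Require Import all_boot all_order all_algebra.
From mathcomp Require Import reals.
From mathcomp Require Import zify ring lra.
Import Order.TTheory GRing.Theory Num.Theory.
Local Open Scope ring_scope.
Set Implicit Arguments. Unset Strict Implicit. Unset Printing Implicit Defensive.

(* Multiplication by q + 1 is injective on R(d) for d = oo or d odd, so rk f is
   determined by (q + 1) rk f = rho Y - rho (cone f) + q rho X, and axiom (c) for
   the rotated triangle Y -> cone f -> Sigma X shows that it exists and is
   nonnegative.  Cones are unique up to isomorphism and rho is invariant under
   isomorphisms (the triangles on an isomorphism and on its inverse give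
   (q + 1)(phi + phi') = 0 with phi, phi' >= 0), so each axiom of a rank function
   becomes a statement about cones: additivity from cone (f (+) g) ~ cone f (+) cone g,
   the triangle axiom from rotation, and the inequality for [[f, h], [0, g]] from
   the octahedral axiom applied to its factorisation
   (1 (+) g) o [[1, h], [0, 1]] o (f (+) 1), whose third triangle has
   phi = rk [[f, h], [0, g]] - rk f - rk g.  Monotonicity under composition is
   the case of zero blocks. *)

Section Triangulated.
Variable C : TriData.
Hypothesis HC : is_triangulated C.
Local Notation Ob := (Ob C).
Local Notation Mor := (@Defs.Mor C).
Local Notation comp := Defs.comp.
Local Notation zob := (@zob C).

Lemma compA X Y Z W (f : Mor X Y) (g : Mor Y Z) (h : Mor Z W) :
  comp h (comp g f) = comp (comp h g) f.
Proof. exact: comp_assoc. Qed.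
Lemma comp1l X Y (f : Mor X Y) : comp (idm Y) f = f. Proof. exact: comp_idl. Qed.
Lemma comp1r X Y (f : Mor X Y) : comp f (idm X) = f. Proof. exact: comp_idr. Qed.
Lemma compDl X Y Z (f : Mor X Y) (g g' : Mor Y Z) : comp (g + g') f = comp g f + comp g' f.
Proof. exact: comp_addl. Qed.
Lemma compDr X Y Z (f f' : Mor X Y) (g : Mor Y Z) : comp g (f + f') = comp g f + comp g f'.
Proof. exact: comp_addr. Qed.

Lemma comp0l X Y Z (f : Mor X Y) : comp (0 : Mor Y Z) f = 0.
Proof. by apply: (addrI (comp 0 f)); rewrite -compDl !addr0. Qed.
Lemma comp0r X Y Z (g : Mor Y Z) : comp g (0 : Mor X Y) = 0.
Proof. by apply: (addrI (comp g 0)); rewrite -compDr !addr0. Qed.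
Lemma compNl X Y Z (f : Mor X Y) (g : Mor Y Z) : comp (- g) f = - comp g f.
Proof. by apply/eqP; rewrite -subr_eq0 opprK -compDl addNr comp0l. Qed.
Lemma compNr X Y Z (f : Mor X Y) (g : Mor Y Z) : comp g (- f) = - comp g f.
Proof. by apply/eqP; rewrite -subr_eq0 opprK -compDr addNr comp0r. Qed.
Lemma compBl X Y Z (f : Mor X Y) (g g' : Mor Y Z) : comp (g - g') f = comp g f - comp g' f.
Proof. by rewrite compDl compNl. Qed.
Lemma compBr X Y Z (f f' : Mor X Y) (g : Mor Y Z) : comp g (f - f') = comp g f - comp g f'.
Proof. by rewrite compDr compNr. Qed.
Lemma Shom0 X Y : Shom (0 : Mor X Y) = 0.
Proof. by apply: (addrI (Shom (0 : Mor X Y))); rewrite -Shom_add // !addr0. Qed.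

Definition is_zero (X : Ob) := idm X = 0.

Lemma mor_to_zero X Z (f : Mor X Z) : is_zero Z -> f = 0.
Proof. by move=> Z0; rewrite -(comp1l f) Z0 comp0l. Qed.
Lemma mor_from_zero X Z (f : Mor Z X) : is_zero Z -> f = 0.
Proof. by move=> Z0; rewrite -(comp1r f) Z0 comp0r. Qed.
Lemma is_zero_zob : is_zero zob.
Proof. exact: zob_zero. Qed.
Lemma is_zero_Sob X : is_zero X -> is_zero (Sob X).
Proof. by rewrite /is_zero -Shom_id // => ->; rewrite Shom0. Qed.
Lemma is_zero_bip X Y : is_zero X -> is_zero Y -> is_zero (bip X Y).
Proof.
move=> X0 Y0; rewrite /is_zero -bip_id //.
by rewrite (mor_from_zero binl X0) (mor_from_zero binr Y0) !comp0l addr0.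
Qed.

Lemma is_iso_zero X Y (u : Mor X Y) : is_zero X -> is_zero Y -> is_iso u.
Proof. by move=> X0 Y0; exists 0; rewrite X0 Y0; split; apply: mor_to_zero. Qed.
Lemma is_iso_id (X : Ob) : is_iso (idm X).
Proof. by exists (idm X); rewrite comp1l. Qed.
Lemma is_iso_of_comps X Y (w : Mor X Y) (w' : Mor Y X) :
  is_iso (comp w' w) -> is_iso (comp w w') -> is_iso w.
Proof.
move=> [a [a1 _]] [b [_ b2]].
have wL : comp (comp a w') w = idm X by rewrite -compA.
have wR : comp w (comp w' b) = idm Y by rewrite compA.
have LR : comp a w' = comp w' b by rewrite -[LHS]comp1r -wR compA wL comp1l.
by exists (comp a w'); split => //; rewrite LR.
Qed.

Lemma tri_rot X Y Z (f : Mor X Y) (g : Mor Y Z) (h : Mor Z (Sob X)) :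
  tri f g h -> tri g h (- Shom f).
Proof. by move/(TR2 HC). Qed.

Lemma tri_Shom X Y Z (f : Mor X Y) (g : Mor Y Z) (h : Mor Z (Sob X)) :
  tri f g h -> tri (- Shom f) (- Shom g) (- Shom h).
Proof. by move=> /tri_rot /tri_rot /tri_rot. Qed.

Lemma tri_of_iso A B (u : Mor A B) : is_iso u ->
  tri u (0 : Mor B zob) (0 : Mor zob (Sob A)).
Proof.
move=> u_iso; apply: (TR1_iso HC (a := idm A) (b := u) (c := idm zob) _ (TR1_id HC A)).
by do 2!split; rewrite ?comp1l ?comp1r ?comp0l ?comp0r //; apply: is_iso_id.
Qed.

Lemma tri_zero_id (W : Ob) : tri (0 : Mor zob W) (idm W) (0 : Mor W (Sob zob)).
Proof.
apply/(TR2 HC); rewrite Shom0 oppr0.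
apply: (TR1_iso HC (a := idm W) (b := idm W) (c := 0) _ (TR1_id HC W)).
split; last by split; rewrite ?comp1l ?comp1r ?comp0l ?comp0r.
by split; [apply: is_iso_id | apply: is_iso_id |
  apply: is_iso_zero; [apply: is_zero_zob | apply/is_zero_Sob/is_zero_zob]].
Qed.

Definition weak_coker Y Z V (g : Mor Y Z) (h : Mor Z V) :=
  forall W (t : Mor Z W), comp t g = 0 -> exists k : Mor V W, t = comp k h.

Lemma tri_weak_coker X Y Z (f : Mor X Y) (g : Mor Y Z) (h : Mor Z (Sob X)) :
  tri f g h -> weak_coker g h.
Proof.
move=> T W t tg0.
have [k [kh _]] := TR3 HC (u := 0 : Mor Y zob) (v := t) (tri_rot T) (tri_zero_id W)
  (etrans tg0 (esym (comp0r _ _))).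
by exists k; rewrite kh comp1l.
Qed.

(* [e - 1] kills [g] and is killed by [h], so through the weak cokernel it squares to zero. *)
Lemma weak_coker_endo_iso Y Z V (g : Mor Y Z) (h : Mor Z V) (e : Mor Z Z) :
  weak_coker g h -> comp e g = g -> comp h e = h -> is_iso e.
Proof.
move=> gh eg he.
have [k nk] : exists k, e - idm Z = comp k h.
  by apply: gh; rewrite compBl eg comp1l subrr.
have nn : comp (e - idm Z) (e - idm Z) = 0.
  by rewrite {1}nk -compA compBr he comp1r subrr comp0r.
have -> : e = idm Z + (e - idm Z) by rewrite addrC subrK.
move: (e - idm Z) nn => n nn; exists (idm Z - n).
by split; rewrite !(compDl, compDr, compNl, compNr, comp1l, comp1r) nn oppr0 addr0 ?addrK ?subrK.
Qed.

Lemma tri_cone_unique X Y Z Z' (f : Mor X Y) (g : Mor Y Z) (h : Mor Z (Sob X))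
  (g' : Mor Y Z') (h' : Mor Z' (Sob X)) :
  tri f g h -> tri f g' h' -> exists w : Mor Z Z', is_iso w.
Proof.
move=> T T'.
have f1 : comp (idm Y) f = comp f (idm X) by rewrite comp1l comp1r.
have [w [wg hw]] := TR3 HC T T' f1.
have [w' [wg' hw']] := TR3 HC T' T f1.
rewrite ?(Shom_id HC) ?comp1l ?comp1r in wg hw wg' hw'.
exists w; apply: (is_iso_of_comps (w' := w')).
- apply: (weak_coker_endo_iso (tri_weak_coker T)); first by rewrite -compA wg wg'.
  by rewrite compA -hw' hw.
- apply: (weak_coker_endo_iso (tri_weak_coker T')); first by rewrite -compA wg' wg.
  by rewrite compA -hw hw'.
Qed.

Lemma bpl_binl X Y W (f : Mor W X) : comp (@bpl C X Y) (comp binl f) = f.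
Proof. by rewrite compA bip_ll // comp1l. Qed.
Lemma bpr_binr X Y W (f : Mor W Y) : comp (@bpr C X Y) (comp binr f) = f.
Proof. by rewrite compA bip_rr // comp1l. Qed.
Lemma bpl_binr X Y W (f : Mor W Y) : comp (@bpl C X Y) (comp binr f) = 0.
Proof. by rewrite compA bip_lr // comp0l. Qed.
Lemma bpr_binl X Y W (f : Mor W X) : comp (@bpr C X Y) (comp binl f) = 0.
Proof. by rewrite compA bip_rl // comp0l. Qed.

Lemma comp_Shom2 X Y Z W (f : Mor X Y) (g : Mor Y Z) (x : Mor W (Sob X)) :
  comp (Shom g) (comp (Shom f) x) = comp (Shom (comp g f)) x.
Proof. by rewrite compA Shom_comp. Qed.

Ltac mx_simpl := repeat progress rewrite ?compDl ?compDr -?compA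
  ?bpl_binl ?bpl_binr ?bpr_binl ?bpr_binr ?(bip_ll HC) ?(bip_lr HC) ?(bip_rl HC) ?(bip_rr HC)
  ?comp_Shom2 -?(Shom_comp HC) ?(Shom_id HC) ?Shom0 ?comp0l ?comp0r ?compNl ?compNr ?comp1l ?comp1r
  ?addr0 ?add0r ?oppr0.

Lemma mor_to_bip_ext X Y W (m m' : Mor W (bip X Y)) :
  comp bpl m = comp bpl m' -> comp bpr m = comp bpr m' -> m = m'.
Proof.
move=> eq_l eq_r; rewrite -(comp1l m) -(comp1l m') -(bip_id HC) !compDl -!compA.
by rewrite eq_l eq_r.
Qed.

Lemma mor_from_bip_ext X Y W (m m' : Mor (bip X Y) W) :
  comp m binl = comp m' binl -> comp m binr = comp m' binr -> m = m'.
Proof.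
move=> eq_l eq_r; rewrite -(comp1r m) -(comp1r m') -(bip_id HC) !compDr !compA.
by rewrite eq_l eq_r.
Qed.

Lemma mor_bip_ext X1 X2 Y1 Y2 (m m' : Mor (bip X1 X2) (bip Y1 Y2)) :
  comp bpl (comp m binl) = comp bpl (comp m' binl) ->
  comp bpl (comp m binr) = comp bpl (comp m' binr) ->
  comp bpr (comp m binl) = comp bpr (comp m' binl) ->
  comp bpr (comp m binr) = comp bpr (comp m' binr) -> m = m'.
Proof. by move=> *; apply: mor_from_bip_ext; apply: mor_to_bip_ext. Qed.

Definition mx X1 X2 Y1 Y2 (a : Mor X1 Y1) (b : Mor X2 Y1) (c : Mor X1 Y2) (e : Mor X2 Y2) :
  Mor (bip X1 X2) (bip Y1 Y2) :=
  comp binl (comp a bpl) + comp binl (comp b bpr) + comp binr (comp c bpl)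
  + comp binr (comp e bpr).

Definition swap X Y : Mor (bip X Y) (bip Y X) := mx 0 (idm Y) (idm X) 0.

Lemma is_iso_swap X Y : is_iso (swap X Y).
Proof. by exists (swap Y X); split; apply: mor_bip_ext; rewrite /swap /mx; mx_simpl. Qed.

Lemma is_iso_lower X Y (f : Mor X Y) : is_iso (mx (idm X) 0 f (idm Y)).
Proof.
exists (mx (idm X) 0 (- f) (idm Y)).
by split; apply: mor_bip_ext; rewrite /mx; mx_simpl; rewrite ?addNr ?addrN.
Qed.

Lemma is_iso_upper Y Z (h : Mor Z Y) : is_iso (upper_mx (idm Y) h (idm Z)).
Proof.
exists (upper_mx (idm Y) (- h) (idm Z)).
by split; apply: mor_bip_ext; rewrite /upper_mx; mx_simpl; rewrite ?addNr ?addrN.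
Qed.

Lemma upper_mx_factor X Y Z W (f : Mor X Y) (h : Mor Z Y) (g : Mor Z W) :
  upper_mx f h g =
  comp (dsum (idm Y) g) (comp (upper_mx (idm Y) h (idm Z)) (dsum f (idm Z))).
Proof. by apply: mor_bip_ext; rewrite /upper_mx /dsum; mx_simpl. Qed.

Lemma upper_mx_zero_r X Y Z (f : Mor X Y) (g : Mor Y Z) :
  upper_mx (comp g f) g (0 : Mor Y zob) =
  comp (swap zob Z) (comp (dsum (0 : Mor X zob) g) (mx (idm X) 0 f (idm Y))).
Proof. by apply: mor_bip_ext; rewrite /upper_mx /dsum /swap /mx; mx_simpl. Qed.

Lemma upper_mx_zero_l X Y Z (f : Mor X Y) (g : Mor Y Z) :
  upper_mx (0 : Mor zob Y) f (comp g f) =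
  comp (mx (idm Y) 0 g (idm Z)) (comp (swap Z Y) (dsum (0 : Mor zob Z) f)).
Proof. by apply: mor_bip_ext; rewrite /upper_mx /dsum /swap /mx; mx_simpl. Qed.

Lemma weak_coker_dsum Y Z V Y' Z' V' (a : Mor Y Z) (b : Mor Z (Sob V))
  (a' : Mor Y' Z') (b' : Mor Z' (Sob V')) :
  weak_coker a b -> weak_coker a' b' ->
  weak_coker (dsum a a') (comp (Shom binl) (comp b bpl) + comp (Shom binr) (comp b' bpr)).
Proof.
move=> ab ab' W t ta0.
have dsum_binl : comp (dsum a a') binl = comp binl a by rewrite /dsum; mx_simpl.
have dsum_binr : comp (dsum a a') binr = comp binr a' by rewrite /dsum; mx_simpl.
have [k hk] : exists k, comp t binl = comp k b.
  by apply: ab; rewrite -compA -dsum_binl compA ta0 comp0l.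
have [k' hk'] : exists k', comp t binr = comp k' b'.
  by apply: ab'; rewrite -compA -dsum_binr compA ta0 comp0l.
exists (comp k (Shom bpl) + comp k' (Shom bpr)).
by apply: mor_from_bip_ext; mx_simpl; rewrite ?hk ?hk'; mx_simpl.
Qed.

Lemma tri_dsum_cone_iso X Y Z X' Y' Z' Q (f : Mor X Y) (a : Mor Y Z) (b : Mor Z (Sob X))
  (f' : Mor X' Y') (a' : Mor Y' Z') (b' : Mor Z' (Sob X'))
  (c : Mor (bip Y Y') Q) (e : Mor Q (Sob (bip X X'))) :
  tri f a b -> tri f' a' b' -> tri (dsum f f') c e -> exists w : Mor Q (bip Z Z'), is_iso w.
Proof.
move=> T T' Ts.
have [w1 [w1c hw1]] := TR3 HC (u := bpl) (v := bpl) Ts T (ltac:(by rewrite /dsum; mx_simpl)).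
have [w2 [w2c hw2]] := TR3 HC (u := bpr) (v := bpr) Ts T' (ltac:(by rewrite /dsum; mx_simpl)).
have [s1 [s1a hs1]] := TR3 HC (u := binl) (v := binl) T Ts (ltac:(by rewrite /dsum; mx_simpl)).
have [s2 [s2a hs2]] := TR3 HC (u := binr) (v := binr) T' Ts (ltac:(by rewrite /dsum; mx_simpl)).
set w := comp binl w1 + comp binr w2.
set s := comp s1 bpl + comp s2 bpr.
set E := comp (Shom binl) (comp b bpl) + comp (Shom binr) (comp b' bpr).
have wc : comp w c = dsum a a' by rewrite /w /dsum compDl -!compA w1c w2c.
have sa : comp s (dsum a a') = c.
  rewrite /s /dsum; mx_simpl; rewrite (compA _ a s1) s1a (compA _ a' s2) s2a -!compA.
  by rewrite -compDr (bip_id HC) comp1r.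
have Ew : comp E w = e.
  rewrite /E /w; mx_simpl; rewrite -hw1 -hw2; mx_simpl.
  by rewrite -compDl -Shom_add // (bip_id HC) (Shom_id HC) comp1l.
have es : comp e s = E by rewrite /s /E compDr !compA -hs1 -hs2 -!compA.
exists w; apply: (is_iso_of_comps (w' := s)).
- apply: (weak_coker_endo_iso (tri_weak_coker Ts)); first by rewrite -compA wc sa.
  by rewrite compA es Ew.
- apply: (weak_coker_endo_iso (weak_coker_dsum (tri_weak_coker T) (tri_weak_coker T'))).
    by rewrite -compA sa wc.
  by rewrite compA Ew es.
Qed.

End Triangulated.

Definition fzero {R : realType} : int -> R := fun=> 0.

Ltac fun_ring := apply: boolp.funext => ?; cbv beta delta [qp1mul fadd fsub qmul fzero]; ring.

Section CoefficientRing.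
Variable R : realType.

Lemma qp1mul_add (a b : int -> R) : qp1mul (fadd a b) = fadd (qp1mul a) (qp1mul b).
Proof. by fun_ring. Qed.
Lemma qp1mul_sub (a b : int -> R) : qp1mul (fsub a b) = fsub (qp1mul a) (qp1mul b).
Proof. by fun_ring. Qed.

Variable d : period.

Lemma inRd_fzero : inRd d (@fzero R).
Proof. by case: d => [|m] /=; first exists 0%N. Qed.

Lemma inRd_add (a b : int -> R) : inRd d a -> inRd d b -> inRd d (fadd a b).
Proof.
case: d => [|m] /=; last by move=> Ha Hb n; rewrite /fadd Ha Hb.
move=> [N Ha] [N' Hb]; exists (maxn N N') => n; rewrite gtn_max => /andP[nN nN'].
by rewrite /fadd Ha ?Hb ?addr0.
Qed.

Lemma inRd_sub (a b : int -> R) : inRd d a -> inRd d b -> inRd d (fsub a b).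
Proof.
case: d => [|m] /=; last by move=> Ha Hb n; rewrite /fsub Ha Hb.
move=> [N Ha] [N' Hb]; exists (maxn N N') => n; rewrite gtn_max => /andP[nN nN'].
by rewrite /fsub Ha ?Hb ?subr0.
Qed.

Lemma inRd_qmul (a : int -> R) : inRd d a -> inRd d (qmul a).
Proof.
case: d => [|m] /=; last by move=> Ha n; rewrite /qmul addrAC Ha.
by move=> [N Ha]; exists N.+1 => n nN; rewrite /qmul Ha //; lia.
Qed.

Hypothesis hd : d = PInf \/ exists n : nat, d = PFin n /\ odd n.

(* The coefficients of an element killed by [q + 1] alternate in sign:
   such an element is zero if it is finitely supported, or if it is
   [d]-periodic for an odd [d], since then [a = (-1)^d a = - a]. *)
Lemma qp1mul_eq0 (a : int -> R) : inRd d a -> qp1mul a = fzero -> a = fzero.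
Proof.
move=> a_d a0; apply: boolp.funext => n; rewrite /fzero.
have shift1 k : a (k + 1) = - a k.
  have := congr1 (@^~ (k + 1)) a0; rewrite /qp1mul /fadd /qmul /fzero addrK.
  by move/eqP; rewrite addrC addr_eq0 => /eqP.
have shift k : a (n + k%:Z) = (-1) ^+ k * a n.
  elim: k => [|k IHk]; first by rewrite addr0 mul1r.
  by rewrite exprS -addn1 PoszD addrA shift1 IHk mulN1r mulNr.
case: hd a_d => [-> [N aN] | [m [-> m_odd]] /= a_m].
- have := shift (N + `|n|).+1; rewrite aN; last by lia.
  by move/esym/eqP; rewrite mulf_eq0 signr_eq0 => /eqP.
- have := shift m; rewrite a_m -signr_odd m_odd expr1 mulN1r => /eqP.
  by rewrite -subr_eq0 opprK -mulr2n mulrn_eq0 /= => /eqP.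
Qed.

Lemma qp1mul_inj (a b : int -> R) : inRd d a -> inRd d b -> qp1mul a = qp1mul b -> a = b.
Proof.
move=> a_d b_d ab.
have ab0 : fsub a b = fzero.
  by apply: qp1mul_eq0; [exact: inRd_sub | rewrite qp1mul_sub ab; fun_ring].
apply: boolp.funext => n; have := congr1 (@^~ n) ab0.
by rewrite /fsub /fzero => /eqP; rewrite subr_eq0 => /eqP.
Qed.

Lemma qp1mul_nneg_sum_eq0 (a b : int -> R) : inRd d a -> inRd d b -> fnneg a -> fnneg b ->
  fadd (qp1mul a) (qp1mul b) = fzero -> qp1mul a = fzero.
Proof.
move=> a_d b_d a_ge0 b_ge0 ab0.
have ab_eq0 : fadd a b = fzero.
  by apply: qp1mul_eq0; [exact: inRd_add | rewrite qp1mul_add].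
suff -> : a = fzero by fun_ring.
apply: boolp.funext => n; have := congr1 (@^~ n) ab_eq0.
by rewrite /fadd /fzero => /eqP; rewrite paddr_eq0 // => /andP[/eqP].
Qed.

End CoefficientRing.

Section RankFromObjects.
Variables (R : realType) (C : TriData) (d : period).
Hypothesis HC : is_triangulated C.
Hypothesis hd : d = PInf \/ exists n : nat, d = PFin n /\ odd n.
Variable rho : Ob C -> int -> R.
Hypothesis rho_S : forall X, rho (Sob X) = qmul (rho X).
Hypothesis rho_sum : forall X Y, rho (bip X Y) = fadd (rho X) (rho Y).
Hypothesis rho_tri : forall X Y Z (f : Mor X Y) (g : Mor Y Z) (h : Mor Z (Sob X)),
  tri f g h ->
  exists phi : int -> R, [/\ inRd d phi, fnneg phi &
    fadd (fsub (rho X) (rho Y)) (rho Z) = qp1mul phi].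
Local Notation Ob := (Ob C).
Local Notation Mor := (@Defs.Mor C).
Local Notation comp := Defs.comp.
Local Notation zob := (@zob C).

Lemma rho_zob : rho zob = fzero.
Proof.
have [p [p_d p_ge0 e_p]] := rho_tri (TR1_id HC zob).
have zob3 : is_zero (bip (bip zob zob) zob).
  by have z := is_zero_zob HC; exact: (is_zero_bip HC (is_zero_bip HC z z) z).
have [p' [p'_d p'_ge0 e_p']] :=
  rho_tri (tri_of_iso HC (is_iso_zero HC (0 : Mor zob _) (is_zero_zob HC) zob3)).
rewrite !rho_sum in e_p'.
have : qp1mul p = fzero.
  by apply: (qp1mul_nneg_sum_eq0 hd p_d p'_d p_ge0 p'_ge0); rewrite -e_p -e_p'; fun_ring.
rewrite -e_p => e0; apply: boolp.funext => n; have := congr1 (@^~ n) e0.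
by rewrite /fadd /fsub /fzero; lra.
Qed.

Lemma rho_iso A B (u : Mor A B) : is_iso u -> rho A = rho B.
Proof.
move=> u_iso; have [v [vu uv]] := u_iso.
have v_iso : is_iso v by exists u.
have [p [p_d p_ge0 e_p]] := rho_tri (tri_of_iso HC u_iso).
have [p' [p'_d p'_ge0 e_p']] := rho_tri (tri_of_iso HC v_iso).
rewrite rho_zob in e_p e_p'.
have : qp1mul p = fzero.
  by apply: (qp1mul_nneg_sum_eq0 hd p_d p'_d p_ge0 p'_ge0); rewrite -e_p -e_p'; fun_ring.
rewrite -e_p => e0; apply: boolp.funext => n; have := congr1 (@^~ n) e0.
by rewrite /fadd /fsub /fzero; lra.
Qed.

Definition cone X Y (f : Mor X Y) : Ob := projT1 (boolp.cid (TR1_ext HC f)).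

Lemma cone_tri X Y (f : Mor X Y) :
  exists (g : Mor Y (cone f)) (h : Mor (cone f) (Sob X)), tri f g h.
Proof. exact: (projT2 (boolp.cid (TR1_ext HC f))). Qed.

Lemma rho_cone X Y Z (f : Mor X Y) (g : Mor Y Z) (h : Mor Z (Sob X)) :
  tri f g h -> rho (cone f) = rho Z.
Proof.
move=> T; have [g' [h' T']] := cone_tri f.
by have [w w_iso] := tri_cone_unique HC T' T; apply: rho_iso w_iso.
Qed.

Definition rank_num X Y (f : Mor X Y) := fadd (fsub (rho Y) (rho (cone f))) (qmul (rho X)).

Lemma rank_num_tri X Y Z (f : Mor X Y) (g : Mor Y Z) (h : Mor Z (Sob X)) :
  tri f g h -> rank_num f = fadd (fsub (rho Y) (rho Z)) (qmul (rho X)).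
Proof. by move=> T; rewrite /rank_num (rho_cone T). Qed.

Lemma rank_ex X Y (f : Mor X Y) :
  exists psi, [/\ inRd d psi, fnneg psi & qp1mul psi = rank_num f].
Proof.
have [g [h T]] := cone_tri f.
have [p [p_d p_ge0 e_p]] := rho_tri (tri_rot HC T).
by exists p; split => //; rewrite -e_p /rank_num rho_S.
Qed.

Definition rk X Y (f : Mor X Y) : int -> R := projT1 (boolp.cid (rank_ex f)).

Lemma rkP X Y (f : Mor X Y) : [/\ inRd d (rk f), fnneg (rk f) & qp1mul (rk f) = rank_num f].
Proof. exact: (projT2 (boolp.cid (rank_ex f))). Qed.

Lemma rk_inRd X Y (f : Mor X Y) : inRd d (rk f). Proof. by case: (rkP f). Qed.
Lemma rk_ge0 X Y (f : Mor X Y) : fnneg (rk f). Proof. by case: (rkP f). Qed.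
Lemma qp1mul_rk X Y (f : Mor X Y) : qp1mul (rk f) = rank_num f. Proof. by case: (rkP f). Qed.

Lemma rk_unique X Y (f : Mor X Y) psi : inRd d psi -> qp1mul psi = rank_num f -> rk f = psi.
Proof.
by move=> psi_d e_psi; apply: (qp1mul_inj hd); rewrite ?qp1mul_rk //; apply: rk_inRd.
Qed.

Lemma rho_cone_iso X Y X' Y' (f : Mor X Y) (u : Mor Y Y') (v : Mor X' X) :
  is_iso u -> is_iso v -> rho (cone (comp u (comp f v))) = rho (cone f).
Proof.
move=> u_iso [v' [v'v vv']]; have [g [h T]] := cone_tri f.
have [u' [u'u uu']] := u_iso.
have v'_iso : is_iso v' by exists v.
have TI : tri_iso f g h (comp u (comp f v)) (comp g u') (comp (Shom v') h) v' u (idm (cone f)).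
  split; first by split => //; exact: is_iso_id.
  by split; rewrite ?(comp1l HC) ?(comp1r HC) // -!(compA HC) ?vv' ?u'u (comp1r HC).
by rewrite (rho_cone (TR1_iso HC TI T)).
Qed.

Lemma rk_iso X Y X' Y' (f : Mor X Y) (u : Mor Y Y') (v : Mor X' X) :
  is_iso u -> is_iso v -> rk (comp u (comp f v)) = rk f.
Proof.
move=> u_iso v_iso; apply: rk_unique; first exact: rk_inRd.
by rewrite qp1mul_rk /rank_num rho_cone_iso // (rho_iso u_iso) (rho_iso v_iso).
Qed.

Lemma rk_isol X Y Y' (f : Mor X Y) (u : Mor Y Y') : is_iso u -> rk (comp u f) = rk f.
Proof. by move=> u_iso; rewrite -{1}(comp1r HC f) rk_iso //; apply: is_iso_id. Qed.
Lemma rk_isor X Y X' (f : Mor X Y) (v : Mor X' X) : is_iso v -> rk (comp f v) = rk f.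
Proof. by move=> v_iso; rewrite -(comp1l HC (comp f v)) rk_iso //; apply: is_iso_id. Qed.

Lemma rho_cone_isol X Y Y' (f : Mor X Y) (u : Mor Y Y') :
  is_iso u -> rho (cone (comp u f)) = rho (cone f).
Proof. by move=> u_iso; rewrite -{1}(comp1r HC f) rho_cone_iso //; apply: is_iso_id. Qed.

Lemma rho_cone_id X : rho (cone (idm X)) = fzero.
Proof. by rewrite (rho_cone (TR1_id HC X)) rho_zob. Qed.

Lemma rho_cone_from_zero Y : rho (cone (0 : Mor zob Y)) = rho Y.
Proof. exact: rho_cone (tri_zero_id HC Y). Qed.

Lemma rho_cone_to_zero X : rho (cone (0 : Mor X zob)) = rho (Sob X).
Proof. exact: rho_cone (tri_rot HC (TR1_id HC X)). Qed.

Lemma rho_cone_dsum X Y X' Y' (f : Mor X Y) (f' : Mor X' Y') :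
  rho (cone (dsum f f')) = fadd (rho (cone f)) (rho (cone f')).
Proof.
have [a [b T]] := cone_tri f; have [a' [b' T']] := cone_tri f'.
have [c [e Ts]] := cone_tri (dsum f f').
by have [w w_iso] := tri_dsum_cone_iso HC T T' Ts; rewrite (rho_iso w_iso) rho_sum.
Qed.

Lemma rho_cone_Shom X Y (f : Mor X Y) : rho (cone (Shom f)) = qmul (rho (cone f)).
Proof.
have [g [h T]] := cone_tri f.
have N1_iso : is_iso (- idm (Sob Y)).
  by exists (- idm (Sob Y)); rewrite (compNl HC) (compNr HC) (comp1l HC) opprK.
have -> : Shom f = comp (- idm (Sob Y)) (comp (- Shom f) (idm (Sob X))).
  by rewrite (comp1r HC) (compNl HC) (comp1l HC) opprK.
rewrite rho_cone_iso //; last exact: is_iso_id.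
by rewrite (rho_cone (tri_Shom HC T)) rho_S.
Qed.

Lemma rk_from_zero Y : rk (0 : Mor zob Y) = fzero.
Proof.
apply: rk_unique; first exact: inRd_fzero.
by rewrite /rank_num rho_cone_from_zero rho_zob; fun_ring.
Qed.

Lemma rk_to_zero X : rk (0 : Mor X zob) = fzero.
Proof.
apply: rk_unique; first exact: inRd_fzero.
by rewrite /rank_num rho_cone_to_zero rho_zob rho_S; fun_ring.
Qed.

Lemma rk_Shom X Y (f : Mor X Y) : rk (Shom f) = qmul (rk f).
Proof.
apply: rk_unique; first exact/inRd_qmul/rk_inRd.
have -> : qp1mul (qmul (rk f)) = qmul (qp1mul (rk f)) by [].
by rewrite qp1mul_rk /rank_num rho_cone_Shom !rho_S.
Qed.

Lemma rk_dsum X Y X' Y' (f : Mor X Y) (f' : Mor X' Y') :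
  rk (dsum f f') = fadd (rk f) (rk f').
Proof.
apply: rk_unique; first exact: inRd_add (rk_inRd f) (rk_inRd f').
by rewrite qp1mul_add !qp1mul_rk /rank_num rho_cone_dsum !rho_sum; fun_ring.
Qed.

Lemma rk_tri X Y Z (f : Mor X Y) (g : Mor Y Z) (h : Mor Z (Sob X)) :
  tri f g h -> fadd (rk f) (rk g) = rk (idm Y).
Proof.
move=> T; symmetry; apply: rk_unique; first exact: inRd_add (rk_inRd f) (rk_inRd g).
rewrite qp1mul_add !qp1mul_rk (rank_num_tri T) (rank_num_tri (tri_rot HC T)).
by rewrite /rank_num rho_cone_id rho_S; fun_ring.
Qed.

Lemma rk_upper X Y Z W (f : Mor X Y) (g : Mor Z W) (h : Mor Z Y) :
  fle (fadd (rk f) (rk g)) (rk (upper_mx f h g)).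
Proof.
pose M1 := comp (upper_mx (idm Y) h (idm Z)) (dsum f (idm Z)).
pose M2 := dsum (idm Y) g.
have [g1 [h1 T1]] := cone_tri M1.
have [g12 [h12 T12]] := cone_tri (comp M2 M1).
have [g2 [h2 T2]] := cone_tri M2.
have [a [b [Tab _ _ _ _]]] := TR4 HC T1 T12 T2.
have [p [p_d p_ge0 e_p]] := rho_tri Tab.
have cone_M1 : rho (cone M1) = rho (cone f).
  rewrite rho_cone_isol; last exact: is_iso_upper.
  by rewrite rho_cone_dsum rho_cone_id; fun_ring.
have cone_M2 : rho (cone M2) = rho (cone g).
  by rewrite rho_cone_dsum rho_cone_id; fun_ring.
have cone_M12 : rho (cone (comp M2 M1)) = rho (cone (upper_mx f h g)).
  by rewrite (upper_mx_factor HC f h g).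
rewrite /fle; suff -> : fsub (rk (upper_mx f h g)) (fadd (rk f) (rk g)) = p by [].
apply: (qp1mul_inj hd) => //; first exact: inRd_sub (rk_inRd _) (inRd_add (rk_inRd f) (rk_inRd g)).
rewrite qp1mul_sub qp1mul_add !qp1mul_rk -e_p cone_M1 cone_M2 cone_M12 /rank_num !rho_sum.
by fun_ring.
Qed.

Lemma rk_comp X Y Z (f : Mor X Y) (g : Mor Y Z) :
  fle (rk (comp g f)) (rk f) /\ fle (rk (comp g f)) (rk g).
Proof.
split.
- have := rk_upper (0 : Mor zob Y) (comp g f) f.
  rewrite (upper_mx_zero_l HC f g) (rk_isol _ (is_iso_lower HC g)).
  rewrite (rk_isol _ (is_iso_swap HC _ _)).
  by rewrite rk_dsum !rk_from_zero => le_fg n; have := le_fg n; rewrite /fsub /fadd /fzero !add0r.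
- have := rk_upper (comp g f) (0 : Mor Y zob) g.
  rewrite (upper_mx_zero_r HC f g) (rk_isol _ (is_iso_swap HC _ _)).
  rewrite (rk_isor _ (is_iso_lower HC f)).
  by rewrite rk_dsum !rk_to_zero => le_fg n; have := le_fg n; rewrite /fsub /fadd /fzero add0r addr0.
Qed.

Lemma rank_fun_rk : rank_fun d rk.
Proof.
split; first by move=> X Y f; split; [apply: rk_inRd | apply: rk_ge0].
by split; [exact: rk_Shom | exact: rk_dsum | exact: rk_tri | exact: rk_upper | exact: rk_comp].
Qed.

Lemma qp1mul_rk_tri X Y Z (f : Mor X Y) (g : Mor Y Z) (h : Mor Z (Sob X)) :
  tri f g h -> qp1mul (rk f) = fadd (fsub (rho Y) (rho Z)) (qmul (rho X)).
Proof. by move=> T; rewrite qp1mul_rk (rank_num_tri T). Qed.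

Lemma rk_unique_tri (rk' : forall X Y : Ob, Mor X Y -> int -> R) :
  (forall X Y (f : Mor X Y), inRd d (rk' X Y f)) ->
  (forall X Y Z (f : Mor X Y) (g : Mor Y Z) (h : Mor Z (Sob X)),
     tri f g h -> qp1mul (rk' X Y f) = fadd (fsub (rho Y) (rho Z)) (qmul (rho X))) ->
  forall X Y (f : Mor X Y), rk' X Y f = rk f.
Proof.
move=> rk'_d rk'_tri X Y f; have [g [h T]] := cone_tri f.
by symmetry; apply: rk_unique => //; rewrite (rk'_tri _ _ _ _ _ _ T) (rank_num_tri T).
Qed.

Lemma rk_integral :
  (forall X Y Z (f : Mor X Y) (g : Mor Y Z) (h : Mor Z (Sob X)),
     tri f g h -> forall phi : int -> R, inRd d phi -> fnneg phi ->
     fadd (fsub (rho X) (rho Y)) (rho Z) = qp1mul phi -> fintegral phi) ->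
  integral_rank_fun rk.
Proof.
move=> phi_int X Y f; have [g [h T]] := cone_tri f.
apply: (phi_int _ _ _ _ _ _ (tri_rot HC T)); [exact: rk_inRd | exact: rk_ge0 |].
by rewrite qp1mul_rk /rank_num rho_S.
Qed.

End RankFromObjects.

Unset Implicit Arguments.

Theorem proposition2p12 (R : realType) (C : TriData) (HC : is_triangulated C)
  (d : period) (hd : d = PInf \/ exists n : nat, d = PFin n /\ odd n)
  (rho : Ob C -> int -> R)
  (rho_val : forall X, inRd d (rho X))
  (rho_S : forall X, rho (Sob X) = qmul (rho X))
  (rho_sum : forall X Y, rho (bip X Y) = fadd (rho X) (rho Y))
  (rho_tri : forall X Y Z (f : Mor X Y) (g : Mor Y Z) (h : Mor Z (Sob X)),
      tri f g h ->
      exists phi : int -> R, [/\ inRd d phi, fnneg phi &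
        fadd (fsub (rho X) (rho Y)) (rho Z) = qp1mul phi]) :
  exists rk : forall X Y : Ob C, Mor X Y -> int -> R,
    [/\ (* rk f = (rho Y - rho (cone f) + q rho X) / (q + 1) *)
        (forall X Y Z (f : Mor X Y) (g : Mor Y Z) (h : Mor Z (Sob X)),
           tri f g h ->
           qp1mul (rk X Y f) = fadd (fsub (rho Y) (rho Z)) (qmul (rho X))),
        (* the quotient is well defined (unique in R(d)) *)
        (forall rk' : forall X Y : Ob C, Mor X Y -> int -> R,
           (forall X Y (f : Mor X Y), inRd d (rk' X Y f)) ->
           (forall X Y Z (f : Mor X Y) (g : Mor Y Z) (h : Mor Z (Sob X)),
              tri f g h ->
              qp1mul (rk' X Y f) = fadd (fsub (rho Y) (rho Z)) (qmul (rho X))) ->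
           forall X Y (f : Mor X Y), rk' X Y f = rk X Y f),
        rank_fun d rk &
        ((forall X, fintegral (rho X)) ->
         (forall X Y Z (f : Mor X Y) (g : Mor Y Z) (h : Mor Z (Sob X)),
            tri f g h -> forall phi : int -> R, inRd d phi -> fnneg phi ->
            fadd (fsub (rho X) (rho Y)) (rho Z) = qp1mul phi -> fintegral phi) ->
         integral_rank_fun rk)].
Proof.
exists (rk HC rho_S rho_tri); split.
- exact: (qp1mul_rk_tri HC hd rho_S rho_sum rho_tri).
- exact: (rk_unique_tri HC hd rho_S rho_sum rho_tri).
- exact: (rank_fun_rk HC hd rho_S rho_sum rho_tri).
-
  by move=> _; apply: rk_integral.
Qed.
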